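(* There exist two model phylogenetic networks $N_3$ and $N_4$ on $S=\{1,\dots,13\}$, both of class I (no pair of distinct convergent nodes), such that $N_3\not\cong N_4$ but $\theta_{AB}(N_3)=\theta_{AB}(N_4)$.
   Context: A DAG $N=(V,E)$ is labeled in a finite set $S$ if its leaves (nodes of out-degree 0) are bijectively labeled by $S$; leaves are identified with their labels. Isomorphism ($\cong$) of labeled DAGs means isomorphism of directed graphs preserving leaf labels. A path $u\rightsquigarrow v$ is a sequence of nodes $u=v_0,\dots,v_k=v$ with $(v_{i-1},v_i)\in E$. A model phylogenetic network on $S$ is a rooted DAG labeled in $S$ whose nodes are classified as tree nodes or hybrid nodes, such that: the root and every internal tree node have out-degree 2; every hybrid node has out-degree 1 and in-degree 2 (allo-polyploid) or in-degree 1 (auto-polyploid), and every node of in-degree 2 is hybrid while all other nodes with in-degree $\neq 1$ are tree nodes; the child of a hybrid node is always a tree node; and strong time consistency holds: an arc is a tree arc if its head is a tree node and a network arc if its head is hybrid; if $x,y$ are nodes for which there exists a sequence $(v_0,\dots,v_k)$ with $v_0=x$, $v_k=y$ such that for every $i$ either $(v_i,v_{i+1})$ is an arc of $N$ or $(v_{i+1},v_i)$ is a network arc of $N$, and at least one pair $(v_i,v_{i+1})$ is a tree arc of $N$, then $x$ and $y$ do not have a hybrid child in common. For a node $u$: $C(u)$ is the set of leaves descending from $u$; $A(u)$ the set of leaves $s$ such that every path from the root to $s$ contains $u$; $B(u)=C(u)\setminus A(u)$. For an arc $e=(u,v)$, $\theta_{AB}(e)=(A(v),B(v),S\setminus C(v))$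 where each leaf $s\in A(v)\cup B(v)$ is weighted by the maximum number of hybrid nodes in a path from $v$ to $s$ (including $v$ and $s$); $\theta_{AB}(N)=\{\theta_{AB}(e)\mid e\in E\}$. Two nodes $u,v$ are convergent if for every leaf $s$ and every $k\ge 0$, there is a path $u\rightsquigarrow s$ containing exactly $k$ hybrid nodes if and only if there is a path $v\rightsquigarrow s$ containing exactly $k$ hybrid nodes. The network is of class I if it contains no pair of (distinct) convergent nodes. *)

From mathcomp Require Import all_boot.
Set Implicit Arguments. Unset Strict Implicit. Unset Printing Implicit Defensive.

(* A finite DAG labelled in S, with nodes 'I_n, arc relation E, a tree/hybrid
   classification (hyb v = true iff v is a hybrid node), a distinguished root
   and an injective leaf labelling lbl : S -> nodes. *)
Record network (S : finType) := Network {
  nV : nat;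
  arc : rel 'I_nV;
  hyb : pred 'I_nV;
  root : 'I_nV;
  lbl : S -> 'I_nV
}.

Section Defs.
Variable S : finType.
Variable N : network S.

Local Notation V := 'I_(nV N).
Local Notation E := (@arc S N).
Local Notation H := (@hyb S N).

Definition indeg (v : V) : nat := #|[pred u : V | E u v]|.
Definition outdeg (v : V) : nat := #|[pred w : V | E v w]|.
Definition is_leaf (v : V) : bool := outdeg v == 0.

(* p is a path u ~> v : the node sequence is u :: p *)
Definition dpath (u v : V) (p : seq V) : Prop := path E u p /\ last u p = v.

Definition hcount (u : V) (p : seq V) : nat := count H (u :: p).

Definition acyclic : Prop :=
  forall (u : V) (p : seq V), p <> [::] -> ~ dpath u u p.

Definition labelled_rooted_dag : Prop :=
  [/\ acyclic,
      indeg (root N) = 0,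
      (forall v : V, v <> root N -> 0 < indeg v),
      injective (lbl N)
    & (forall v : V, is_leaf v <-> exists s : S, lbl N s = v)].

(* the step relation of strong time consistency: follow an arc forwards, or a
   network arc (arc whose head is hybrid) backwards *)
Definition tc_step (x y : V) : bool := E x y || (E y x && H x).
Definition tree_arc (x y : V) : bool := E x y && ~~ H y.

Definition strong_time_consistent : Prop :=
  forall (x y : V) (p : seq V),
    path tc_step x p -> last x p = y ->
    has (fun ab => tree_arc ab.1 ab.2) (zip (x :: p) p) ->
    ~ (exists h : V, [/\ H h, E x h & E y h]).

Definition degree_conditions : Prop :=
  [/\ outdeg (root N) = 2,
      (forall v : V, ~~ H v -> ~~ is_leaf v -> outdeg v = 2),
      (forall v : V, H v -> outdeg v = 1 /\ (indeg v = 1 \/ indeg v = 2)),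
      (forall v : V, indeg v = 2 -> H v)
    & (forall v : V, ~~ H v -> indeg v <= 1)].

Definition model_network : Prop :=
  [/\ labelled_rooted_dag,
      degree_conditions,
      (forall u v : V, H u -> E u v -> ~~ H v)
    & strong_time_consistent].

Definition inC (u : V) (s : S) : Prop := exists p, dpath u (lbl N s) p.
Definition inA (u : V) (s : S) : Prop :=
  forall p, dpath (root N) (lbl N s) p -> u \in root N :: p.
Definition inB (u : V) (s : S) : Prop := inC u s /\ ~ inA u s.

Definition max_hyb (v : V) (s : S) (w : nat) : Prop :=
  (exists p, dpath v (lbl N s) p /\ hcount v p = w) /\
  (forall p, dpath v (lbl N s) p -> hcount v p <= w).

(* theta_AB of an arc with head v: the triple (A(v), B(v), S \ C(v)) together
   with the weights of the leaves of A(v) u B(v) (weight recorded as 0 outside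
   C(v), where it carries no information). *)
Definition theta_of (v : V)
  (t : {set S} * {set S} * {set S} * {ffun S -> nat}) : Prop :=
  let: (a, b, c, w) := t in
  [/\ (forall s, s \in a <-> inA v s),
      (forall s, s \in b <-> inB v s),
      (forall s, s \in c <-> ~ inC v s),
      (forall s, inC v s -> max_hyb v s (w s))
    & (forall s, ~ inC v s -> w s = 0)].

Definition in_thetaAB (t : {set S} * {set S} * {set S} * {ffun S -> nat}) : Prop :=
  exists u v : V, E u v /\ theta_of v t.

Definition convergent (u v : V) : Prop :=
  forall (s : S) (k : nat),
    (exists p, dpath u (lbl N s) p /\ hcount u p = k) <->
    (exists p, dpath v (lbl N s) p /\ hcount v p = k).

Definition classI : Prop := forall u v : V, convergent u v -> u = v.

End Defs.

Definition net_iso (S : finType) (N1 N2 : network S) : Prop :=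
  exists f : 'I_(nV N1) -> 'I_(nV N2),
    [/\ bijective f,
        (forall u v, @arc S N1 u v = @arc S N2 (f u) (f v))
      & (forall s, f (lbl N1 s) = lbl N2 s)].

From Pilot Require Import Defs.
From mathcomp Require Import all_boot.
(* [arc] and [root] also name definitions of path.v and fingraph.v. *)
Import Defs.
Set Implicit Arguments. Unset Strict Implicit. Unset Printing Implicit Defensive.

(* N3 and N4 differ by exchanging the heads of two arcs. They are not isomorphic because an
   isomorphism preserves the cluster C(u) of every node, while N3 has an arc whose pair of
   clusters occurs on no arc of N4. Everything else is decided by computation: on a network
   whose arcs strictly decrease a height function the paths from a node can be enumerated,
   which decides C(u), A(u), the weights of theta_AB and the path profiles separating
   non-convergent nodes; strong time consistency is reachability in the step graph whose
   states carry a flag recording whether a tree arc has been used. *)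

(* [enum 'I_n] with proof terms that stay small under [vm_compute]: [insub]
   would evaluate the [idP] proof carried by every ordinal. *)
Definition ord_seq n : seq 'I_n := pmap (insub_eq _) (iota 0 n).

Lemma ord_seqE n : ord_seq n = enum 'I_n.
Proof. by rewrite enumT unlock; apply: eq_pmap => k; rewrite insub_eqE. Qed.

Lemma mem_ord_seq n (i : 'I_n) : i \in ord_seq n.
Proof. by rewrite ord_seqE mem_enum. Qed.

Lemma all_ord_seqP n (P : pred 'I_n) : reflect (forall i, P i) (all P (ord_seq n)).
Proof. by apply: (iffP allP) => [h i | h i _]; [apply: h; apply: mem_ord_seq | apply: h]. Qed.

Lemma card_ord_pred n (P : pred 'I_n) : #|[pred i | P i]| = count P (ord_seq n).
Proof. by rewrite cardE -size_filter ord_seqE enumT. Qed.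

Lemma injective_ord_seq n (T : eqType) (f : 'I_n -> T) :
  uniq (map f (ord_seq n)) -> injective f.
Proof. by rewrite ord_seqE => uf; apply/injectiveP. Qed.

Lemma foldr_maxn_mem (l : seq nat) : l != [::] -> foldr maxn 0 l \in l.
Proof.
elim: l => // a [|b l] IHl _; first by rewrite /= maxn0 mem_seq1.
rewrite [foldr _ _ (a :: _)]/= inE; move: (IHl isT); set M := foldr _ _ _.
by case: (leqP a M) => _ hM; rewrite ?hM ?orbT ?eqxx.
Qed.

Lemma leq_foldr_maxn (l : seq nat) x : x \in l -> x <= foldr maxn 0 l.
Proof.
elim: l => // a l IHl; rewrite inE leq_max => /orP [/eqP -> | /IHl ->]; last exact: orbT.
by rewrite leqnn.
Qed.

Lemma max_hyb_uniq (S : finType) (N : network S) v s w1 w2 :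
  @max_hyb S N v s w1 -> max_hyb v s w2 -> w1 = w2.
Proof.
move=> [[p1 [d1 <-]] le1] [[p2 [d2 <-]] le2].
by apply/eqP; rewrite eqn_leq le1 ?le2.
Qed.

Section Isomorphism.
Variables (S : finType) (N1 N2 : network S) (f : 'I_(nV N1) -> 'I_(nV N2)).
Hypothesis f_arc : forall u v, arc u v = arc (f u) (f v).
Hypothesis f_lbl : forall s, f (lbl N1 s) = lbl N2 s.

Lemma iso_inC u s : inC u s -> inC (f u) s.
Proof.
move=> [p [pp lp]]; exists (map f p); split; last by rewrite last_map lp f_lbl.
by rewrite path_map (eq_path (e' := @arc S N1)) // => a b; rewrite f_arc.
Qed.

End Isomorphism.

Lemma net_iso_inC (S : finType) (N1 N2 : network S) :
  net_iso N1 N2 ->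
  exists f : 'I_(nV N1) -> 'I_(nV N2),
    (forall u v, arc u v -> arc (f u) (f v)) /\ (forall u s, inC (f u) s <-> inC u s).
Proof.
move=> [f [[g fK gK] f_arc f_lbl]].
have g_arc x y : arc x y = arc (g x) (g y) by rewrite -{1}(gK x) -{1}(gK y) f_arc.
have g_lbl s : g (lbl N2 s) = lbl N1 s by rewrite -f_lbl fK.
exists f; split=> [u v | u s]; first by rewrite f_arc.
by split=> [/(iso_inC g_arc g_lbl) | /(iso_inC f_arc f_lbl)] //; rewrite fK.
Qed.

Definition theta_decode (S : finType) (e : S -> bool * bool * nat) :
  {set S} * {set S} * {set S} * {ffun S -> nat} :=
  ([set s | (e s).1.1], [set s | (e s).1.2 && ~~ (e s).1.1], [set s | ~~ (e s).1.2],
   [ffun s => if (e s).1.2 then (e s).2 else 0]).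

Lemma eq_theta_decode (S : finType) (e1 e2 : S -> bool * bool * nat) :
  e1 =1 e2 -> theta_decode e1 = theta_decode e2.
Proof.
by move=> e12; congr (_, _, _, _); [apply/setP.. | apply/ffunP] => s; rewrite ?inE ?ffunE e12.
Qed.

Section Decide.
Variables (m : nat) (N : network 'I_m).
Local Notation V := 'I_(nV N).
Local Notation E := (@arc _ N).
Local Notation H := (@hyb _ N).
Local Notation nodes := (ord_seq (nV N)).
Local Notation leaves := (ord_seq m).
Local Notation tc := (@tc_step _ N).
Local Notation tree := (@tree_arc _ N).

Definition children (u : V) : seq V := [seq v <- nodes | E u v].
Definition parents (v : V) : seq V := [seq u <- nodes | E u v].

Lemma mem_children u v : (v \in children u) = E u v.
Proof. by rewrite mem_filter mem_ord_seq andbT. Qed.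

Lemma mem_parents u v : (u \in parents v) = E u v.
Proof. by rewrite mem_filter mem_ord_seq andbT. Qed.

Fixpoint height_upto k (u : V) : nat :=
  if k is k'.+1 then (foldr maxn 0 [seq height_upto k' v | v <- children u]).+1 else 0.

Definition height (u : V) : nat := height_upto (nV N) u.

Definition ranked : bool := all (fun u => all (fun v => height v < height u) (children u)) nodes.

Hypothesis rankedN : ranked.

Lemma height_arc u v : E u v -> height v < height u.
Proof.
by rewrite -mem_children; move/all_ord_seqP: rankedN => /(_ u)/allP; apply.
Qed.

Lemma height_path u q : path E u q -> size q + height (last u q) <= height u.
Proof.
elim: q u => [|v q IHq] u /=; first by rewrite add0n.
by case/andP => /height_arc uv /IHq; rewrite addSn => /leq_ltn_trans; apply.
Qed.

Lemma ranked_acyclic : acyclic N.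
Proof.
move=> u [//|v q] _ [/height_path hq lq]; move: hq; rewrite lq /= addSn.
by move/(leq_ltn_trans (leq_addl _ _)); rewrite ltnn.
Qed.

Fixpoint paths_upto k (u : V) : seq (seq V) :=
  if k is k'.+1 then [::] :: [seq v :: q | v <- children u, q <- paths_upto k' v]
  else [::].

Lemma mem_paths_upto k u q : (q \in paths_upto k u) = path E u q && (size q < k).
Proof.
elim: k u q => [|k IHk] u [|v q] //=; first by rewrite in_nil andbF.
rewrite in_cons /= ltnS.
apply/allpairsPdep/idP => [[w [r [wu rw [-> ->]]]] | /andP [/andP [uv vq] sq]].
  by move: wu rw; rewrite mem_children IHk => -> /andP [-> ->].
by exists v, q; rewrite mem_children uv IHk vq sq.
Qed.

Definition paths_from (u : V) : seq (seq V) := paths_upto (height u).+1 u.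

Lemma mem_paths_from u q : (q \in paths_from u) = path E u q.
Proof.
rewrite mem_paths_upto ltnS andb_idr // => /height_path.
exact/leq_trans/leq_addr.
Qed.

Lemma dpath_fromP u v q : reflect (dpath u v q) ((q \in paths_from u) && (last u q == v)).
Proof. by rewrite mem_paths_from; apply: (iffP andP) => [] [? /eqP]. Qed.

Definition inCb (u : V) (s : 'I_m) : bool := has (fun q => last u q == lbl N s) (paths_from u).

Lemma inCP u s : reflect (inC u s) (inCb u s).
Proof.
apply: (iffP hasP) => [[q uq lq] | [q /dpath_fromP /andP [uq lq]]]; last by exists q.
by exists q; apply/dpath_fromP; rewrite uq.
Qed.

Definition hyb_pathb (u : V) (s : 'I_m) (k : nat) : bool :=
  has (fun q => (last u q == lbl N s) && (hcount u q == k)) (paths_from u).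

Lemma hyb_pathP u s k :
  reflect (exists p, dpath u (lbl N s) p /\ hcount u p = k) (hyb_pathb u s k).
Proof.
apply: (iffP hasP) => [[q uq /andP [lq /eqP hq]] | [q [/dpath_fromP /andP [uq lq] hq]]].
  by exists q; split => //; apply/dpath_fromP; rewrite uq.
by exists q => //; rewrite lq hq eqxx.
Qed.

Definition inAb (u : V) (s : 'I_m) : bool :=
  all (fun q => (last (root N) q == lbl N s) ==> (u \in root N :: q)) (paths_from (root N)).

Lemma inAP u s : reflect (inA u s) (inAb u s).
Proof.
apply: (iffP allP) => [A_u q /dpath_fromP /andP [qr lq] | A_u q qr].
  exact: implyP (A_u q qr) lq.
by apply/implyP => lq; apply: A_u; apply/dpath_fromP; rewrite qr.
Qed.

Definition weight (u : V) (s : 'I_m) : nat :=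
  foldr maxn 0 [seq hcount u q | q <- paths_from u & last u q == lbl N s].

Lemma max_hyb_weight u s : inC u s -> max_hyb u s (weight u s).
Proof.
move=> /inCP C_us; rewrite /weight; split => [|p /dpath_fromP uq]; last first.
  by apply/leq_foldr_maxn/map_f; rewrite mem_filter andbC.
have : [seq hcount u q | q <- paths_from u & last u q == lbl N s] != [::].
  by rewrite -size_eq0 size_map size_filter -lt0n -has_count.
case/foldr_maxn_mem/mapP => q; rewrite mem_filter andbC => uq ->.
by exists q; split => //; apply/dpath_fromP.
Qed.

Definition theta_entry (u : V) (s : 'I_m) : bool * bool * nat := (inAb u s, inCb u s, weight u s).

Lemma theta_ofP v t : theta_of v t <-> t = theta_decode (theta_entry v).
Proof.
case: t => [[[a b] c] w]; split => [[Ha Hb Hc Hw H0] | [-> -> -> ->]].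
  congr (_, _, _, _); [apply/setP.. | apply/ffunP] => s; rewrite ?inE ?ffunE /=.
  - by apply/idP/inAP => /Ha.
  - apply/idP/andP => [/Hb [C_s nA_s] | [/inCP C_s /(elimN (inAP v s)) nA_s]].
      by split; [apply/inCP | apply/(introN (inAP v s))].
    exact/Hb.
  - apply/idP/idP => [/Hc nC_s | /(elimN (inCP v s)) nC_s]; last exact/Hc.
    exact/(introN (inCP v s)).
  - case: (inCP v s) => [C_s | nC_s]; last exact: H0.
    exact: max_hyb_uniq (Hw s C_s) (max_hyb_weight C_s).
split=> s; rewrite ?inE ?ffunE /=.
- by split=> /inAP.
- by split=> [/andP [/inCP C_s /(elimN (inAP v s)) nA_s] | [/inCP -> /(introN (inAP v s)) ->]].
- by split=> [/(elimN (inCP v s)) | /(introN (inCP v s))].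
- by move=> C_s; rewrite (introT (inCP v s) C_s); apply: max_hyb_weight.
- by move=> nC_s; case: (inCP v s) => // /nC_s.
Qed.

Definition has_parent (v : V) : bool := has (E^~ v) nodes.

Lemma in_thetaABP t :
  in_thetaAB N t <-> exists2 v, has_parent v & t = theta_decode (theta_entry v).
Proof.
split=> [[u [v [uv /theta_ofP t_v]]] | [v /hasP [u _ uv] /theta_ofP t_v]].
  by exists v => //; apply/hasP; exists u => //; apply: mem_ord_seq.
by exists u, v.
Qed.

(* [map (theta_entry v) leaves] for every arc head [v], sharing the path enumerations. *)
Definition thetas : seq (seq (bool * bool * nat)) :=
  let root_paths := paths_from (root N) in
  [seq let paths := paths_from v in
       [seq (all (fun q => (last (root N) q == lbl N s) ==> (v \in root N :: q)) root_paths,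
             has (fun q => last v q == lbl N s) paths,
             foldr maxn 0 [seq hcount v q | q <- paths & last v q == lbl N s]) | s <- leaves]
  | v <- nodes & has_parent v].

Lemma thetasE : thetas = [seq map (theta_entry v) leaves | v <- nodes & has_parent v].
Proof. by []. Qed.

(* The matrix of [hyb_pathb u s k], sharing the enumeration of the paths from [u]. *)
Definition profile (u : V) : seq (seq bool) :=
  let paths := paths_from u in
  [seq [seq has (fun q => (last u q == lbl N s) && (hcount u q == k)) paths
       | k <- iota 0 (nV N).+1] | s <- leaves].

Lemma classI_profile : uniq (map profile nodes) -> classI N.
Proof.
move=> /injective_ord_seq profile_inj u v uv; apply: profile_inj.
apply/eq_map => s; apply/eq_map => k.
by apply/hyb_pathP/hyb_pathP => /(uv s k).
Qed.

Definition tc_flag (a b : V * bool) : bool :=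
  tc a.1 b.1 && (b.2 == a.2 || tree a.1 b.1).

Lemma tc_flag_path x p f :
  path tc x p ->
  exists2 q, path tc_flag (x, f) q &
    last (x, f) q = (last x p, f || has (fun ab => tree ab.1 ab.2) (zip (x :: p) p)).
Proof.
elim: p x f => [|y p IHp] x f /=; first by exists [::]; rewrite ?orbF.
case/andP => xy /(IHp y (f || tree x y)) [q yq lq].
by exists ((y, f || tree x y) :: q); rewrite /= ?lq ?orbA // /tc_flag xy eqxx.
Qed.

Definition reach (a : V * bool) : seq (V * bool) :=
  dfs (fun a => [seq b <- [seq (x, f) | x <- nodes, f <- [:: false; true]] | tc_flag a b])
      (2 * nV N) [::] a.

Lemma reach_path x p :
  path tc x p -> (last x p, has (fun ab => tree ab.1 ab.2) (zip (x :: p) p)) \in reach (x, false).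
Proof.
move=> /(tc_flag_path false) [q xq lq]; apply/dfs_pathP => //.
  by rewrite card_prod card_ord card_bool mulnC leq_addl.
apply: (@DfsPath _ _ _ _ _ q); rewrite ?lq ?disjoint_has ?has_pred0 //.
apply: sub_path xq => a b ab; rewrite /= mem_filter ab.
case: b {ab} => v f; apply/flatten_mapP; exists v; first exact: mem_ord_seq.
by case: f; rewrite !inE eqxx ?orbT.
Qed.

Definition stc_check : bool :=
  all (fun h => all (fun x => all (fun y => (y, true) \notin reach (x, false)) (parents h))
                    (parents h)) [seq h <- nodes | H h].

Lemma strong_time_consistentP : stc_check -> strong_time_consistent N.
Proof.
move=> /allP check x y p xp lp tree_p [h [Hh xh yh]].
have /check/allP/(_ x) : h \in [seq h <- nodes | H h] by rewrite mem_filter Hh mem_ord_seq.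
rewrite mem_parents => /(_ xh)/allP/(_ y); rewrite mem_parents => /(_ yh)/negP; apply.
by have := reach_path xp; rewrite lp tree_p.
Qed.

Lemma indegE v : indeg v = size (parents v).
Proof. by rewrite size_filter; apply: card_ord_pred. Qed.

Lemma outdegE v : outdeg v = size (children v).
Proof. by rewrite size_filter; apply: card_ord_pred. Qed.

Definition dag_check : bool :=
  [&& size (parents (root N)) == 0, all (fun v => (v == root N) || (0 < size (parents v))) nodes,
      uniq (map (lbl N) leaves)
    & all (fun v => (size (children v) == 0) == (v \in map (lbl N) leaves)) nodes].

Lemma labelled_rooted_dagP : dag_check -> labelled_rooted_dag N.
Proof.
case/and4P => /eqP root0 /all_ord_seqP indeg_pos lbl_uniq /all_ord_seqP leafs.
split; rewrite ?indegE //.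
- exact: ranked_acyclic.
- by move=> v /eqP nv; rewrite indegE; move: (indeg_pos v); rewrite (negbTE nv).
- exact: injective_ord_seq.
move=> v; rewrite /is_leaf outdegE (eqP (leafs v)); split => [/mapP [s _ ->] | [s <-]].
  by exists s.
by apply: map_f; apply: mem_ord_seq.
Qed.

Definition degree_check : bool :=
  [&& size (children (root N)) == 2,
      all (fun v => ~~ H v ==> (size (children v) != 0) ==> (size (children v) == 2)) nodes,
      all (fun v => H v ==> (size (children v) == 1) && (size (parents v) \in [:: 1; 2])) nodes,
      all (fun v => (size (parents v) == 2) ==> H v) nodes
    & all (fun v => ~~ H v ==> (size (parents v) <= 1)) nodes].

Lemma degree_conditionsP : degree_check -> degree_conditions N.
Proof.
case/and5P => /eqP root2 /all_ord_seqP tree2 /all_ord_seqP hyb1 /all_ord_seqP hyb2.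
move/all_ord_seqP => tree1.
split=> [|v|v|v|v]; rewrite /is_leaf ?indegE ?outdegE //.
- by move=> Tv /negbTE nl; apply/eqP; move: (tree2 v); rewrite Tv nl.
- by move=> Hv; move: (hyb1 v); rewrite Hv !inE => /andP [/eqP -> /orP [] /eqP ->]; auto.
- by move=> /eqP d2; apply: (implyP (hyb2 v)).
- exact: implyP (tree1 v).
Qed.

Definition model_check : bool :=
  [&& dag_check, degree_check,
      all (fun u => H u ==> all (fun v => ~~ H v) (children u)) nodes
    & stc_check].

Lemma model_networkP : model_check -> model_network N.
Proof.
case/and4P => dag deg /all_ord_seqP hyb_tree stc; split.
- exact: labelled_rooted_dagP.
- exact: degree_conditionsP.
- by move=> u v Hu; rewrite -mem_children; move: (hyb_tree u) => /implyP/(_ Hu)/allP; apply.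
- exact: strong_time_consistentP.
Qed.

Definition cluster (u : V) : seq 'I_m := [seq s <- leaves | inCb u s].

End Decide.

Lemma in_thetaAB_subset m (N1 N2 : network 'I_m) :
  ranked N1 -> ranked N2 -> {subset thetas N1 <= thetas N2} ->
  forall t, in_thetaAB N1 t -> in_thetaAB N2 t.
Proof.
move=> rN1 rN2 sub12 t /(in_thetaABP rN1) [v pv ->].
have /sub12 : map (theta_entry v) (ord_seq m) \in thetas N1.
  by rewrite thetasE; apply: map_f; rewrite mem_filter pv mem_ord_seq.
rewrite thetasE => /mapP [w]; rewrite mem_filter => /andP [pw _] /eq_in_map vw.
apply/(in_thetaABP rN2); exists w => //.
by apply: eq_theta_decode => s; apply: vw; apply: mem_ord_seq.
Qed.

Lemma in_thetaAB_eq m (N1 N2 : network 'I_m) :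
  ranked N1 -> ranked N2 -> perm_eq (undup (thetas N1)) (undup (thetas N2)) ->
  forall t, in_thetaAB N1 t <-> in_thetaAB N2 t.
Proof.
move=> rN1 rN2 /perm_mem eq12 t.
split; apply: in_thetaAB_subset => // e; rewrite -mem_undup; first by rewrite eq12 mem_undup.
by rewrite -eq12 mem_undup.
Qed.

Lemma not_net_iso_cluster_arc m (N1 N2 : network 'I_m) (a b : 'I_(nV N1)) :
  ranked N1 -> ranked N2 -> arc a b ->
  all (fun x => all (fun y => (cluster x != cluster a) || (cluster y != cluster b)) (children x))
      (ord_seq (nV N2)) ->
  ~ net_iso N1 N2.
Proof.
move=> rN1 rN2 ab /all_ord_seqP no_arc /net_iso_inC [f [f_arc f_inC]].
have f_cluster u : cluster (f u) = cluster u.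
  by apply: eq_filter => s; apply/(inCP rN2 (f u) s)/(inCP rN1 u s) => /f_inC.
move/allP: (no_arc (f a)) => /(_ (f b)); rewrite mem_children => /(_ (f_arc _ _ ab)).
by rewrite !f_cluster !eqxx.
Qed.

Definition network_of m n (le_mn : m <= n) (children : seq (seq nat)) (hybrids : seq nat)
  (r : 'I_n) : network 'I_m :=
  Network (fun u v : 'I_n => val v \in nth [::] children u) (fun u => val u \in hybrids) r
          (widen_ord le_mn).

(* Node [s < 13] is the leaf labelled [s], 26 is the root and 21, 23, 25 are the hybrid
   nodes; [children4] is [children3] with the arcs 16 -> 1 and 18 -> 20 replaced by
   16 -> 20 and 18 -> 1. *)
Definition children3 : seq (seq nat) :=
  [:: [::]; [::]; [::]; [::]; [::]; [::]; [::]; [::]; [::]; [::]; [::]; [::]; [::];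
      [:: 24; 6]; [:: 5; 21]; [:: 14; 13]; [:: 22; 1]; [:: 23; 0]; [:: 20; 16]; [:: 17; 18];
      [:: 25; 21]; [:: 7]; [:: 4; 23]; [:: 15]; [:: 3; 25]; [:: 2]; [:: 19; 27]; [:: 8; 28];
      [:: 9; 29]; [:: 10; 30]; [:: 11; 12]].

Definition children4 : seq (seq nat) :=
  [:: [::]; [::]; [::]; [::]; [::]; [::]; [::]; [::]; [::]; [::]; [::]; [::]; [::];
      [:: 24; 6]; [:: 5; 21]; [:: 14; 13]; [:: 22; 20]; [:: 23; 0]; [:: 1; 16]; [:: 17; 18];
      [:: 25; 21]; [:: 7]; [:: 4; 23]; [:: 15]; [:: 3; 25]; [:: 2]; [:: 19; 27]; [:: 8; 28];
      [:: 9; 29]; [:: 10; 30]; [:: 11; 12]].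

Definition N3 : network 'I_13 :=
  network_of (isT : 13 <= 31) children3 [:: 21; 23; 25] (Ordinal (isT : 26 < 31)).
Definition N4 : network 'I_13 :=
  network_of (isT : 13 <= 31) children4 [:: 21; 23; 25] (Ordinal (isT : 26 < 31)).

Theorem mainTheorem2 :
  exists N3 N4 : network 'I_13,
    [/\ model_network N3 /\ model_network N4,
        classI N3 /\ classI N4,
        ~ net_iso N3 N4
      & forall t, in_thetaAB N3 t <-> in_thetaAB N4 t].
Proof.
have [r3 r4] : ranked N3 /\ ranked N4 by split; vm_compute.
exists N3, N4; split.
- by split; [apply: (model_networkP r3) | apply: (model_networkP r4)]; vm_compute.
- by split; [apply: (classI_profile r3) | apply: (classI_profile r4)]; vm_compute.
- pose a : 'I_(nV N3) := Ordinal (isT : 18 < 31); pose b : 'I_(nV N3) := Ordinal (isT : 20 < 31).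
  by apply: (not_net_iso_cluster_arc (a := a) (b := b) r3 r4); vm_compute.
- by apply: (in_thetaAB_eq r3 r4); vm_compute.
Qed.
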